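(* Let $\mathcal H$ be a connected graded Hopf algebra over a field $\mathbb K$ of characteristic zero, $\alpha:\mathcal H_1\to\mathbb K$ a nonzero linear map and $q=q_\alpha$ the associated inverse-factorial character. Then for all $h,k\in\mathbb K$ and every homogeneous $x\in\mathcal H$, $$q(x)\,(h+k)^{|x|}=\sum_{(x)}q(x_1)\,q(x_2)\,h^{|x_1|}k^{|x_2|},$$ where $\Delta(x)=\sum_{(x)}x_1\otimes x_2$ is written with homogeneous $x_1,x_2$.
   Context: A connected graded Hopf algebra is $\mathcal H=\bigoplus_{n\ge0}\mathcal H_n$ with $\mathcal H_0=\mathbb K\mathbf 1$, product and coproduct $\Delta$ respecting the grading; $|x|$ is the degree of a homogeneous $x$. The reduced coproduct is $\Delta'(x)=\Delta(x)-x\otimes\mathbf 1-\mathbf 1\otimes x=\sum'_{(x)}x'\otimes x''$ (homogeneous components). The inverse-factorial character $q_\alpha$ is the linear form on $\mathcal H$ determined by $q_\alpha(\mathbf 1)=1$, $q_\alpha|_{\mathcal H_1}=\alpha$, and for homogeneous $x$ with $|x|\ge2$: $q_\alpha(x)=\frac{1}{2^{|x|}-2}\sum'_{(x)}q_\alpha(x')q_\alpha(x'')$. *)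

From HB Require Import structures.
From mathcomp Require Import all_boot all_order all_algebra.
Set Implicit Arguments. Unset Strict Implicit. Unset Printing Implicit Defensive.
Import Order.TTheory GRing.Theory Num.Theory.
Local Open Scope ring_scope.

(* Encoding conventions:
   - the grading H = (+)_n H_n is given by projections pi n : H -> H;
   - an element of H (x) H is represented by a finite list of pairs
     (a_i, b_i), standing for sum_i a_i (x) b_i;  two lists represent the same
     tensor iff they agree on all f (x) g with f, g linear forms on H
     (linear forms separate points of H (x) H);
   - cop x is a chosen representative of Delta(x). *)

Section Defs.
Variables (K : fieldType) (H : algType K).

Definition lin_form (f : H -> K) : Prop :=
  forall (a : K) (x y : H), f (a *: x + y) = a * f x + f y.

Definition lin_map (f : H -> H) : Prop :=
  forall (a : K) (x y : H), f (a *: x + y) = a *: f x + f y.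

Definition teval2 (f g : H -> K) (s : seq (H * H)) : K :=
  \sum_(p <- s) f p.1 * g p.2.

Definition teq2 (s t : seq (H * H)) : Prop :=
  forall f g, lin_form f -> lin_form g -> teval2 f g s = teval2 f g t.

Definition homog (pi : nat -> H -> H) (n : nat) (x : H) : Prop := pi n x = x.

Record is_cgHopf (pi : nat -> H -> H) (cop : H -> seq (H * H))
    (eps : H -> K) (S : H -> H) : Prop := {
  pi_lin : forall n, lin_map (pi n);
  pi_orth : forall n m x, pi n (pi m x) = if n == m then pi n x else 0;
  pi_decomp : forall x, exists N, x = \sum_(n < N) pi n x;
  mul_graded : forall n m x y, homog pi n x -> homog pi m y ->
                 homog pi (n + m)%N (x * y);
  one_graded : homog pi 0 1;
  connected : forall x, homog pi 0 x -> exists c : K, x = c *: 1;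
  cop_lin : forall (a : K) x y,
      teq2 (cop (a *: x + y)) ([seq (a *: p.1, p.2) | p <- cop x] ++ cop y);
  cop_graded : forall n x, homog pi n x ->
      teq2 (cop x) [seq (pi i p.1, pi (n - i)%N p.2) | p <- cop x, i <- iota 0 n.+1];
  coassoc : forall x f g h, lin_form f -> lin_form g -> lin_form h ->
      \sum_(p <- cop x) (\sum_(r <- cop p.1) f r.1 * g r.2) * h p.2
      = \sum_(p <- cop x) f p.1 * (\sum_(r <- cop p.2) g r.1 * h r.2);
  cop_mul : forall x y,
      teq2 (cop (x * y)) [seq (p.1 * r.1, p.2 * r.2) | p <- cop x, r <- cop y];
  cop_one : teq2 (cop 1) [:: (1, 1)];
  eps_lin : lin_form eps;
  eps_graded : forall n x, (0 < n)%N -> homog pi n x -> eps x = 0;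
  counitl : forall x, \sum_(p <- cop x) eps p.1 *: p.2 = x;
  counitr : forall x, \sum_(p <- cop x) eps p.2 *: p.1 = x;
  eps_mul : forall x y, eps (x * y) = eps x * eps y;
  eps_one : eps 1 = 1;
  S_lin : lin_map S;
  antipodel : forall x, \sum_(p <- cop x) S p.1 * p.2 = eps x *: 1;
  antipoder : forall x, \sum_(p <- cop x) p.1 * S p.2 = eps x *: 1
}.

(* q is the inverse-factorial character q_alpha:
   q linear, q(1)=1, q = alpha on H_1, and for homogeneous x with |x| = n >= 2,
   q(x) = (2^n - 2)^-1 * (q (x) q)(Delta' x), where
   (q (x) q)(Delta' x) = (q (x) q)(Delta x) - q(x) q(1) - q(1) q(x). *)
Definition is_q_alpha (pi : nat -> H -> H) (cop : H -> seq (H * H))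
    (alpha q : H -> K) : Prop :=
  [/\ lin_form q, q 1 = 1,
      (forall x, homog pi 1 x -> q x = alpha x) &
      (forall n x, (2 <= n)%N -> homog pi n x ->
         q x = (2 ^+ n - 2 : K)^-1 *
               (\sum_(p <- cop x) q p.1 * q p.2 - q x * q 1 - q 1 * q x))].

End Defs.

From HB Require Import structures.
From mathcomp Require Import all_boot all_order all_algebra ring zify.
Import Order.TTheory GRing.Theory Num.Theory.
Local Open Scope ring_scope.
Set Implicit Arguments. Unset Strict Implicit.

(* Write q_a for q restricted to degree a and, for x homogeneous of degree n,
   c_a(x) := (q_a (x) q_(n-a))(Delta x)  (qbideg n a x below).  The heart of
   the proof is c_a(x) = 'C(n, a) q(x), by strong induction on n.
   Counitality gives c_0(x) = c_n(x) = q(x).  Coassociativity, together with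
   the induction hypothesis in degrees b and n - 1, gives
   b c_b = 'C(n-1, b-1) c_1, i.e. n c_b = 'C(n, b) c_1.  The recursion defining
   q says that sum_a c_a(x) = 2^n q(x); summing n c_b = 'C(n, b) c_1 over b
   then forces c_1 = n q(x).  The theorem follows by evaluating
   (sum_i h^i q_i) (x) (sum_j k^j q_j) on Delta x and using the binomial
   theorem. *)

Section LinearMaps.
Variables (K : fieldType) (H : algType K).

Lemma lin_form0 (f : H -> K) : lin_form f -> f 0 = 0.
Proof.
move=> lf; have := lf 1 0 0; rewrite scale1r addr0 mul1r => E.
by apply: (@addrI _ (f 0)); rewrite addr0 -E.
Qed.

Lemma lin_formD (f : H -> K) x y : lin_form f -> f (x + y) = f x + f y.
Proof. by move=> lf; have := lf 1 x y; rewrite scale1r mul1r. Qed.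

Lemma lin_formZ (f : H -> K) a x : lin_form f -> f (a *: x) = a * f x.
Proof. by move=> lf; have := lf a x 0; rewrite !addr0 (lin_form0 lf) addr0. Qed.

Lemma lin_form_sum (f : H -> K) (I : Type) (r : seq I) (P : pred I) (F : I -> H) :
  lin_form f -> f (\sum_(i <- r | P i) F i) = \sum_(i <- r | P i) f (F i).
Proof. by move=> lf; apply: (big_morph f (fun x y => lin_formD x y lf) (lin_form0 lf)). Qed.

Lemma lin_map0 (f : H -> H) : lin_map f -> f 0 = 0.
Proof.
move=> lf; have := lf 1 0 0; rewrite scale1r addr0 scale1r => E.
by apply: (@addrI _ (f 0)); rewrite addr0 -E.
Qed.

Lemma lin_mapD (f : H -> H) x y : lin_map f -> f (x + y) = f x + f y.
Proof. by move=> lf; have := lf 1 x y; rewrite !scale1r. Qed.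

Lemma lin_mapZ (f : H -> H) a x : lin_map f -> f (a *: x) = a *: f x.
Proof. by move=> lf; have := lf a x 0; rewrite !addr0 (lin_map0 lf) addr0. Qed.

Lemma lin_map_sum (f : H -> H) (I : Type) (r : seq I) (P : pred I) (F : I -> H) :
  lin_map f -> f (\sum_(i <- r | P i) F i) = \sum_(i <- r | P i) f (F i).
Proof. by move=> lf; apply: (big_morph f (fun x y => lin_mapD x y lf) (lin_map0 lf)). Qed.

Lemma lin_form_comp (f : H -> K) (g : H -> H) :
  lin_form f -> lin_map g -> lin_form (f \o g).
Proof. by move=> lf lg a x y /=; rewrite lg lf. Qed.

Lemma lin_form_lincomb (N : nat) (c : nat -> K) (F : nat -> H -> K) :
  (forall i, lin_form (F i)) -> lin_form (fun y => \sum_(i < N) c i * F i y).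
Proof.
move=> lF a x y; rewrite mulr_sumr -big_split; apply: eq_bigr => i _.
by rewrite lF mulrDr mulrCA.
Qed.

End LinearMaps.

Lemma sum_binomial (K : fieldType) (n : nat) :
  \sum_(i < n.+1) ('C(n, i)%:R : K) = 2 ^+ n.
Proof. by rewrite (_ : 2 = 1 + 1) // exprDn; apply: eq_bigr => i _; rewrite !expr1n mul1r. Qed.

Lemma sum_ord_ends (K : fieldType) (n : nat) (F : nat -> K) : (0 < n)%N ->
  (forall i, (0 < i < n)%N -> F i = 0) -> \sum_(i < n.+1) F i = F 0%N + F n.
Proof.
case: n => // n _ F0; rewrite big_ord_recl big_ord_recr /= big1 ?add0r //.
by move=> i _; apply: F0; rewrite /bump /= add1n ltnS ltn_ord.
Qed.

Section GradedHopf.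
Variables (K : fieldType) (H : algType K).
Variables (pi : nat -> H -> H) (cop : H -> seq (H * H)) (eps : H -> K) (S : H -> H).
Hypothesis HH : is_cgHopf pi cop eps S.

Definition conv (f g : H -> K) (y : H) : K := teval2 f g (cop y).

Lemma conv_ext f f' g g' y : f =1 f' -> g =1 g' -> conv f g y = conv f' g' y.
Proof. by move=> Ef Eg; apply: eq_bigr => p _; rewrite Ef Eg. Qed.

Lemma lin_form_conv f g : lin_form f -> lin_form g -> lin_form (conv f g).
Proof.
move=> lf lg a x y; rewrite /conv (cop_lin HH a x y lf lg) /teval2.
rewrite big_cat big_map mulr_sumr; congr (_ + _); apply: eq_bigr => p _.
by rewrite lin_formZ // mulrA.
Qed.

Lemma conv_homog f g n x : lin_form f -> lin_form g -> homog pi n x ->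
  conv f g x = \sum_(i < n.+1) conv (f \o pi i) (g \o pi (n - i)%N) x.
Proof.
move=> lf lg hx; rewrite /conv (cop_graded HH hx lf lg) /teval2.
rewrite big_allpairs_dep exchange_big /=.
by rewrite -[0%N :: iota 1 n]/(index_iota 0 n.+1) big_mkord.
Qed.

Lemma homog_pi m z : homog pi m (pi m z).
Proof. by rewrite /homog (pi_orth HH) eqxx. Qed.

Lemma eps_pi0 z : eps (pi 0%N z) = eps z.
Proof.
have [N zE] := pi_decomp HH z; case: N zE => [|N] zE; rewrite [in RHS]zE.
  by rewrite zE !big_ord0 (lin_map0 (pi_lin HH 0)).
rewrite (lin_form_sum _ _ _ (eps_lin HH)) big_ord_recl big1 ?addr0 // => i _.
exact: (eps_graded HH _ (homog_pi _ _)).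
Qed.

Lemma lin_form_pi0 f z : lin_form f -> f (pi 0%N z) = eps z * f 1.
Proof.
move=> lf; have [c pi0z] := connected HH (homog_pi 0 z).
by rewrite -eps_pi0 pi0z (lin_formZ _ _ lf) (lin_formZ _ _ (eps_lin HH)) (eps_one HH) mulr1.
Qed.

Variable q : H -> K.
Hypotheses (lin_q : lin_form q) (q1 : q 1 = 1).

Definition qdeg (i : nat) : H -> K := q \o pi i.

Definition qbideg (n a : nat) (x : H) : K := conv (qdeg a) (qdeg (n - a)) x.

Definition binomial_at (n : nat) : Prop :=
  forall x a, homog pi n x -> (a <= n)%N -> qbideg n a x = 'C(n, a)%:R * q x.

Lemma lin_form_qdeg i : lin_form (qdeg i).
Proof. exact: lin_form_comp lin_q (pi_lin HH i). Qed.

Lemma qdeg_pi i l y : qdeg i (pi l y) = if i == l then qdeg i y else 0.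
Proof. by rewrite /qdeg /= (pi_orth HH); case: eqP => // _; apply: lin_form0. Qed.

Lemma conv_qdeg_eq0 i j m z : homog pi m z -> (i + j != m)%N ->
  conv (qdeg i) (qdeg j) z = 0.
Proof.
move=> hz ijm; rewrite (conv_homog (lin_form_qdeg i) (lin_form_qdeg j) hz).
apply: big1 => l _; apply: big1 => p _ /=; rewrite !qdeg_pi.
case: eqP => [il|_]; last by rewrite mul0r.
case: eqP => [jl|_]; last by rewrite mulr0.
by move: ijm; rewrite il jl subnKC ?eqxx // -ltnS.
Qed.

Lemma qbideg0 n x : homog pi n x -> qbideg n 0 x = q x.
Proof.
move=> hx; rewrite -{2}hx -[in RHS](counitl HH x) /qbideg subn0.
rewrite (lin_map_sum _ _ _ (pi_lin HH n)) (lin_form_sum _ _ _ lin_q).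
apply: eq_bigr => p _; rewrite (lin_mapZ _ _ (pi_lin HH n)) (lin_formZ _ _ lin_q).
by rewrite /qdeg /= lin_form_pi0 // q1 mulr1.
Qed.

Lemma qbidegn n x : homog pi n x -> qbideg n n x = q x.
Proof.
move=> hx; rewrite -{2}hx -[in RHS](counitr HH x) /qbideg subnn.
rewrite (lin_map_sum _ _ _ (pi_lin HH n)) (lin_form_sum _ _ _ lin_q).
apply: eq_bigr => p _; rewrite (lin_mapZ _ _ (pi_lin HH n)) (lin_formZ _ _ lin_q).
by rewrite [qdeg 0 _]/qdeg /= lin_form_pi0 // q1 mulr1 mulrC.
Qed.

(* Splitting y into homogeneous components, only the degree-m one contributes. *)
Lemma binomial_at_qdeg m a y : binomial_at m -> (a <= m)%N ->
  qbideg m a y = 'C(m, a)%:R * qdeg m y.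
Proof.
move=> bin_m am; have [N ->] := pi_decomp HH y.
rewrite /qbideg (lin_form_sum _ _ _ (lin_form_conv (lin_form_qdeg _) (lin_form_qdeg _))).
rewrite (lin_form_sum _ _ _ (lin_form_qdeg m)) mulr_sumr; apply: eq_bigr => l _.
have [lm|lm] := eqVneq (nat_of_ord l) m.
  by rewrite lm qdeg_pi eqxx; apply: bin_m (homog_pi _ _) am.
rewrite qdeg_pi eq_sym (negbTE lm) mulr0.
by apply: conv_qdeg_eq0 (homog_pi _ _) _; rewrite subnKC // eq_sym.
Qed.

Hypothesis pchar0 : [pchar K] =i pred0.
Hypothesis q_rec : forall n x, (2 <= n)%N -> homog pi n x ->
  q x = (2 ^+ n - 2 : K)^-1 * (\sum_(p <- cop x) q p.1 * q p.2 - q x * q 1 - q 1 * q x).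

Lemma natr_neq0 k : (0 < k)%N -> k%:R != 0 :> K.
Proof. by rewrite ((pcharf0P K).1 pchar0) -lt0n. Qed.

Lemma exp2_sub2_neq0 n : (2 <= n)%N -> (2 ^+ n - 2 : K) != 0.
Proof.
move=> n2; rewrite -natrX -natrB ?natr_neq0 // ?subn_gt0 -{1}(expn1 2).
  by rewrite ltn_exp2l.
by rewrite leq_exp2l // ltnW.
Qed.

Lemma sum_qbideg n x : (2 <= n)%N -> homog pi n x ->
  \sum_(a < n.+1) qbideg n a x = 2 ^+ n * q x.
Proof.
move=> n2 hx; have := q_rec n2 hx; rewrite q1 mulr1 mul1r.
move/(congr1 ( *%R (2 ^+ n - 2))); rewrite mulrA mulfV ?exp2_sub2_neq0 // mul1r => E.
have -> : \sum_(a < n.+1) qbideg n a x = conv q q x by rewrite (conv_homog lin_q lin_q hx).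
have -> : conv q q x = (2 ^+ n - 2) * q x + q x + q x by rewrite E /conv /teval2; ring.
ring.
Qed.

Section Induction.
Variable n : nat.
Hypothesis IH : forall m, (m < n)%N -> binomial_at m.

Lemma qbideg_coassoc x b : homog pi n x -> (0 < b < n)%N ->
  b%:R * qbideg n b x = 'C(n.-1, b.-1)%:R * qbideg n 1 x.
Proof.
move=> hx /andP[b0 bn].
have left_split y : conv (qdeg 1) (qdeg b.-1) y = b%:R * qdeg b y.
  by rewrite -subn1 -/(qbideg b 1 y) (binomial_at_qdeg _ (IH bn)) ?bin1.
have right_split y : conv (qdeg b.-1) (qdeg (n - b)) y = 'C(n.-1, b.-1)%:R * qdeg n.-1 y.
  rewrite (_ : (n - b = n.-1 - b.-1)%N); last by lia.
  apply: (binomial_at_qdeg _ (IH _)); first by lia.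
  by rewrite -!subn1 leq_sub2r // ltnW.
transitivity (\sum_(p <- cop x) conv (qdeg 1) (qdeg b.-1) p.1 * qdeg (n - b) p.2).
  by under [RHS]eq_bigr => p _ do rewrite left_split -mulrA; rewrite -mulr_sumr.
transitivity (\sum_(p <- cop x) qdeg 1 p.1 * conv (qdeg b.-1) (qdeg (n - b)) p.2).
  exact: (coassoc HH x (lin_form_qdeg 1) (lin_form_qdeg _) (lin_form_qdeg _)).
under eq_bigr => p _ do rewrite right_split mulrCA.
by rewrite -mulr_sumr /qbideg subn1.
Qed.

Lemma qbideg_qbideg1 x b : homog pi n x -> (0 < b < n)%N ->
  n%:R * qbideg n b x = 'C(n, b)%:R * qbideg n 1 x.
Proof.
move=> hx /andP[b0 bn]; apply: (@mulfI _ b%:R); first exact: natr_neq0.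
rewrite mulrCA qbideg_coassoc ?b0 // mulrA -natrM mul_bin_diag prednK //.
by rewrite natrM -mulrA mulrCA.
Qed.

(* Sum qbideg_qbideg1 over b; at the ends b = 0, n both sides are known from
   counitality, and the total is given by sum_qbideg. *)
Lemma qbideg1 x : (2 <= n)%N -> homog pi n x -> qbideg n 1 x = n%:R * q x.
Proof.
move=> n2 hx.
have ends : \sum_(b < n.+1) (n%:R * qbideg n b x - 'C(n, b)%:R * qbideg n 1 x)
    = (n%:R * q x - qbideg n 1 x) + (n%:R * q x - qbideg n 1 x).
  rewrite (sum_ord_ends (F := fun b => n%:R * qbideg n b x - 'C(n, b)%:R * qbideg n 1 x)).
  - by rewrite qbideg0 // qbidegn // bin0 binn mul1r.
  - exact: ltnW.
  - by move=> b bn; rewrite qbideg_qbideg1 ?subrr.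
have : (2 ^+ n - 2 : K) * (n%:R * q x - qbideg n 1 x) = 0.
  transitivity (n%:R * (2 ^+ n * q x) - 2 ^+ n * qbideg n 1 x
                - ((n%:R * q x - qbideg n 1 x) + (n%:R * q x - qbideg n 1 x))); first ring.
  rewrite -ends -sum_qbideg // -sum_binomial mulr_sumr mulr_suml -sumrB.
  by rewrite subrr.
by move/eqP; rewrite mulf_eq0 (negbTE (exp2_sub2_neq0 n2)) subr_eq0 => /eqP.
Qed.

End Induction.

Lemma binomial_at_all n : binomial_at n.
Proof.
elim/ltn_ind: n => n IH x a hx an.
have [->|a0] := posnP a; first by rewrite qbideg0 // bin0 mul1r.
have [->|na] := eqVneq a n; first by rewrite qbidegn // binn mul1r.
have an' : (a < n)%N by rewrite ltn_neqAle na.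
apply: (@mulfI _ n%:R); first by apply: natr_neq0; lia.
rewrite qbideg_qbideg1 ?a0 ?an' // qbideg1 //; last by lia.
exact: mulrCA.
Qed.

Definition qweight (t : K) (N : nat) (y : H) : K := \sum_(i < N) t ^+ i * qdeg i y.

Lemma lin_form_qweight t N : lin_form (qweight t N).
Proof. by apply: lin_form_lincomb => i; apply: lin_form_qdeg. Qed.

Lemma qweight_homog t N d y : homog pi d y -> (d < N)%N ->
  qweight t N y = t ^+ d * q y.
Proof.
move=> hy dN; rewrite /qweight -hy (bigD1 (Ordinal dN)) //= big1 => [|i ne].
  by rewrite qdeg_pi eqxx addr0.
by rewrite qdeg_pi; case: eqP => [id|_]; [case/eqP: ne; apply: val_inj | rewrite mulr0].
Qed.

Lemma conv_qweight h k N n x : homog pi n x -> (n < N)%N ->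
  conv (qweight h N) (qweight k N) x = q x * (h + k) ^+ n.
Proof.
move=> hx nN.
rewrite (conv_homog (lin_form_qweight _ _) (lin_form_qweight _ _) hx).
rewrite addrC exprDn mulr_sumr; apply: eq_bigr => a _.
have an : (a <= n)%N := ltnSE (ltn_ord a).
have aN : (a < N)%N := leq_trans (ltn_ord a) nN.
rewrite (conv_ext (f' := fun y => h ^+ a * qdeg a y)
                  (g' := fun y => k ^+ (n - a) * qdeg (n - a) y)); first last.
- by move=> y; rewrite /= (qweight_homog _ (homog_pi _ _)) // (leq_ltn_trans (leq_subr _ _)).
- by move=> y; rewrite /= (qweight_homog _ (homog_pi _ _)).
rewrite /conv /teval2; under eq_bigr => p _ do rewrite mulrACA.
rewrite -mulr_sumr -/(teval2 _ _ _) -/(conv _ _ x) -/(qbideg n a x).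
by rewrite binomial_at_all // -mulr_natr; ring.
Qed.

End GradedHopf.

(* The identity holds for every linear q with q 1 = 1 satisfying the recursion. *)
Theorem mainTheorem2 (K : fieldType) (H : algType K)
    (pi : nat -> H -> H) (cop : H -> seq (H * H)) (eps : H -> K) (S : H -> H) :
  [pchar K] =i pred0 ->
  is_cgHopf pi cop eps S ->
  forall alpha : H -> K, lin_form alpha ->
  (exists x, homog pi 1 x /\ alpha x != 0) ->
  forall q : H -> K, is_q_alpha pi cop alpha q ->
  forall (h k : K) (n : nat) (x : H), homog pi n x ->
  forall s : seq ((H * nat) * (H * nat)),
    (forall p, p \in s -> homog pi p.1.2 p.1.1 /\ homog pi p.2.2 p.2.1) ->
    teq2 (cop x) [seq (p.1.1, p.2.1) | p <- s] ->
    q x * (h + k) ^+ n = \sum_(p <- s) q p.1.1 * q p.2.1 * h ^+ p.1.2 * k ^+ p.2.2.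
Proof.
move=> pchar0 HH alpha _ _ q [lin_q q1 _ q_rec] h k n x hx s hs cop_s.
pose M := (\max_(p <- s) (p.1.2 + p.2.2))%N; pose N := (n + M).+1.
have lin_qw t := lin_form_qweight HH lin_q t N.
rewrite -(conv_qweight HH lin_q q1 pchar0 q_rec h k hx (leq_addr _ _ : n < N)%N).
rewrite /conv (cop_s _ _ (lin_qw h) (lin_qw k)) /teval2 big_map.
apply: eq_big_seq => p ps; have [hp1 hp2] := hs p ps.
have deg_p : (p.1.2 + p.2.2 <= M)%N := leq_bigmax_seq (F := fun p => _) p ps isT.
have [deg1 deg2] : (p.1.2 < N /\ p.2.2 < N)%N by rewrite /N; lia.
by rewrite (qweight_homog HH lin_q _ hp1 deg1) (qweight_homog HH lin_q _ hp2 deg2); ring.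
Qed.
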